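(* Let $p\in(0,1)$, $\gamma>0$, $B>0$, $w,N\in\mathbb{N}$, and let $(\xi_j^{(N)*})_{j=1}^N$ be the unique maximizer of $\mathcal{T}_N$. Then $\xi_j^{(N)*}>0$ for all $j\in\{1,\dots,N\}$ and $\xi_1^{(N)*}>\xi_2^{(N)*}>\dots>\xi_N^{(N)*}$.
   Context: Logarithms are base 2. For an admissible (nonnegative, with sum at most $B$) sequence $(x_j)_{j\ge1}$, $$\mathcal{T}_\infty(x_1,x_2,\dots)=\sum_{k=1}^{w}p^2(1-p)^{k-1}\frac{k}{2}\log_2\!\Big(1+\gamma\frac{B}{k}\Big)+\sum_{j=1}^{\infty}p(1-p)^{j+w-1}\frac12\log_2(1+\gamma x_j)+\sum_{k=1}^{\infty}p^2(1-p)^{k+w-1}\frac{w}{2}\log_2\!\Big(1+\gamma\frac{B-\sum_{j=1}^{k}x_j}{w}\Big).$$ For $N\in\mathbb{N}$ and $\xi_1,\dots,\xi_N\ge0$ with $\sum_{j=1}^N\xi_j\le B$, define $\mathcal{T}_N(\xi_1,\dots,\xi_N)=\mathcal{T}_\infty(\xi_1,\dots,\xi_N,0,0,\dots)$. $\mathcal{T}_N$ has a unique maximizer over this compact set, denoted $(\xi_j^{(N)*})_{j=1}^N$. *)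

From Stdlib Require Import Reals Lra Lia.
From Coquelicot Require Import Coquelicot.
Open Scope R_scope.

Definition log2 (x : R) : R := ln x / ln 2.

(* psum x n = x_1 + ... + x_n  (sequences are indexed from 1; x 0 is unused) *)
Fixpoint psum (x : nat -> R) (n : nat) : R :=
  match n with
  | O => 0
  | S m => psum x m + x (S m)
  end.

Definition T_inf (p gamma B : R) (w : nat) (x : nat -> R) : R :=
  psum (fun k => p ^ 2 * (1 - p) ^ (k - 1) * (INR k / 2)
                 * log2 (1 + gamma * (B / INR k))) w
  (* sum_{j>=1} p (1-p)^{j+w-1} 1/2 log2(1 + gamma x_j) ; j = n+1 *)
  + Series (fun n => p * (1 - p) ^ (n + w) * (1 / 2)
                     * log2 (1 + gamma * x (S n)))
  + Series (fun n => p ^ 2 * (1 - p) ^ (n + w) * (INR w / 2)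
                     * log2 (1 + gamma * ((B - psum x (S n)) / INR w))).

Definition padN (N : nat) (xi : nat -> R) : nat -> R :=
  fun j => if (Nat.leb 1 j && Nat.leb j N)%bool then xi j else 0.

Definition T_N (p gamma B : R) (w N : nat) (xi : nat -> R) : R :=
  T_inf p gamma B w (padN N xi).

Definition admissibleN (B : R) (N : nat) (xi : nat -> R) : Prop :=
  (forall j, (1 <= j <= N)%nat -> 0 <= xi j) /\ psum xi N <= B.

Definition is_maximizerN (p gamma B : R) (w N : nat) (xi : nat -> R) : Prop :=
  admissibleN B N xi /\
  forall eta, admissibleN B N eta -> T_N p gamma B w N eta <= T_N p gamma B w N xi.

From Stdlib Require Import Reals Lra Lia.
From Coquelicot Require Import Coquelicot.
Open Scope R_scope.

(* At a maximiser x no feasible perturbation increases T.  Write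
   F_j = 1/(1 + gamma x_j) and R_k = 1/(1 + gamma (B - x_1 - ... - x_k)/w).
   Moving mass between x_j and x_{j+1} gives the first-order conditions
   F_j <= (1-p) F_{j+1} + p R_j if x_{j+1} > 0, and >= if x_j > 0; moving mass
   between x_N and the unspent budget gives F_N >= R_N if x_N > 0, and
   F_N <= R_N if the budget is not exhausted.  A downward induction then gives
   R_j <= F_j for every j.  As R_j < R_{j+1} when x_{j+1} > 0, the assumption
   x_{j+1} >= x_j would give F_j < F_{j+1} <= F_j, so positive coordinates
   strictly decrease.  Finally x_N > 0: otherwise the budget is exhausted, and
   the last positive coordinate x_j violates F_j >= (1-p) * 1 + p * 1. *)

Lemma is_series_geom_from (m : nat) (c q : R) : Rabs q < 1 ->
  is_series (fun n => if (m <=? n)%nat then c * q ^ n else 0) (c * q ^ m / (1 - q)).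
Proof.
  intros Hq. assert (Hq1 : 1 - q <> 0) by (apply Rabs_def2 in Hq; lra).
  revert c; induction m as [|m IHm]; intros c.
  - apply (is_series_ext (fun n => q ^ n * c)); [intros n; simpl; ring|].
    replace (c * q ^ 0 / (1 - q)) with (/ (1 - q) * c) by (simpl; field; exact Hq1).
    now apply is_series_scal_r, is_series_geom.
  - apply is_series_decr_1.
    match goal with |- is_series _ ?l => replace l with (c * q * q ^ m / (1 - q))
      by (cbv [plus opp]; simpl; field; exact Hq1) end.
    apply (is_series_ext (fun n => if (m <=? n)%nat then c * q * q ^ n else 0)); [|apply IHm].
    intros n; simpl. destruct (m <=? n)%nat; [ring|reflexivity].
Qed.

Lemma is_series_point (m : nat) (v : R) : is_series (fun n => if (n =? m)%nat then v else 0) v.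
Proof.
  revert v; induction m as [|m IHm]; intros v; apply is_series_decr_1.
  - match goal with |- is_series _ ?l => replace l with (0 * (1/2) ^ 1 / (1 - 1/2))
      by (cbv [plus opp]; simpl; field) end.
    apply (is_series_ext (fun n => if (1 <=? n)%nat then 0 * (1/2) ^ n else 0)).
    + intros n. destruct (1 <=? n)%nat; simpl; ring.
    + apply is_series_geom_from. rewrite Rabs_pos_eq; lra.
  - match goal with |- is_series _ ?l => replace l with v
      by (cbv [plus opp]; simpl; ring) end.
    apply IHm.
Qed.

Lemma ex_series_eventually_geom (a : nat -> R) (M : nat) (c q : R) : Rabs q < 1 ->
  (forall n, (M <= n)%nat -> a n = c * q ^ n) -> ex_series a.
Proof.
  intros Hq Ha. apply (ex_series_incr_n a M).
  apply (ex_series_ext (fun k => q ^ k * (c * q ^ M))).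
  - intros k. rewrite Ha by lia. rewrite pow_add. simpl. ring.
  - eexists. apply is_series_scal_r, is_series_geom, Hq.
Qed.

Lemma derive_nonpos_of_right_max (f : R -> R) (l d : R) : is_derive f 0 l -> 0 < d ->
  (forall h, 0 < h < d -> f h <= f 0) -> l <= 0.
Proof.
  intros Hf Hd Hmax. apply is_derive_Reals in Hf.
  apply Rnot_lt_le; intros Hl.
  destruct (Hf (l / 2) ltac:(lra)) as [del Hdel].
  pose proof (cond_pos del) as Hdel0.
  set (h := Rmin del d / 2).
  assert (Hh : 0 < h < del /\ h < d).
  { pose proof (Rmin_l del d). pose proof (Rmin_r del d).
    pose proof (Rmin_glb_lt del d 0 Hdel0 Hd). unfold h. lra. }
  specialize (Hdel h ltac:(lra) ltac:(rewrite Rabs_right; lra)).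
  rewrite Rplus_0_l in Hdel. apply Rabs_def2 in Hdel.
  assert (Hquot : 0 < (f h - f 0) / h) by lra.
  pose proof (Hmax h ltac:(lra)).
  assert (f h - f 0 = (f h - f 0) / h * h) by (field; lra).
  nra.
Qed.

Lemma derive_nonneg_of_left_max (f : R -> R) (l d : R) : is_derive f 0 l -> 0 < d ->
  (forall h, - d < h < 0 -> f h <= f 0) -> 0 <= l.
Proof.
  intros Hf Hd Hmax.
  assert (Hneg : is_derive (fun t => f (- t)) 0 (- l)).
  { replace (- l) with (scal (-1) l) by (cbv [scal]; simpl; cbv [mult]; simpl; ring).
    apply (is_derive_comp f Ropp 0 l (-1)); [now rewrite Ropp_0|].
    auto_derive; [exact I | ring]. }
  enough (- l <= 0) by lra.
  apply (derive_nonpos_of_right_max _ _ d Hneg Hd).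
  intros h Hh. rewrite Ropp_0. apply Hmax. lra.
Qed.

Lemma nat_ind_down (P : nat -> Prop) (N : nat) :
  P N -> (forall j, (1 <= j < N)%nat -> P (S j) -> P j) ->
  forall j, (1 <= j <= N)%nat -> P j.
Proof.
  intros HN Hstep j Hj. remember (N - j)%nat as k eqn:Hk. revert j Hj Hk.
  induction k as [|k IHk]; intros j Hj Hk.
  - replace j with N by lia. exact HN.
  - apply Hstep; [lia|]. apply IHk; lia.
Qed.

Definition supported (N : nat) (x : nat -> R) : Prop := forall k, (N < k)%nat -> x k = 0.

Definition feasible (B : R) (N : nat) (x : nat -> R) : Prop := admissibleN B N x /\ supported N x.

Definition bump (x : nat -> R) (j : nat) (h : R) (k : nat) : R :=
  x k + (if (k =? j)%nat then h else 0).

Definition transfer (x : nat -> R) (j : nat) (h : R) (k : nat) : R :=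
  x k + (if (k =? j)%nat then h else 0) - (if (k =? S j)%nat then h else 0).

Lemma psum_ext (x y : nat -> R) (n : nat) :
  (forall k, (1 <= k <= n)%nat -> x k = y k) -> psum x n = psum y n.
Proof.
  induction n as [|n IHn]; intros Hxy; simpl; [reflexivity|].
  rewrite IHn, Hxy; [reflexivity | lia | intros k Hk; apply Hxy; lia].
Qed.

Lemma psum_le_psum (x : nat -> R) (m n : nat) :
  (forall k, (m < k <= n)%nat -> 0 <= x k) -> (m <= n)%nat -> psum x m <= psum x n.
Proof.
  intros Hx Hmn. induction Hmn as [|n Hmn IHn]; simpl; [lra|].
  pose proof (Hx (S n) ltac:(lia)). pose proof (IHn ltac:(intros; apply Hx; lia)). lra.
Qed.

Lemma psum_supported (x : nat -> R) (N n : nat) :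
  supported N x -> (N <= n)%nat -> psum x n = psum x N.
Proof.
  intros Hx Hn. induction Hn as [|n Hn IHn]; simpl; [reflexivity|].
  rewrite IHn, Hx by lia. ring.
Qed.

Lemma psum_bump (x : nat -> R) (j : nat) (h : R) (n : nat) : (1 <= j)%nat ->
  psum (bump x j h) n = psum x n + (if (j <=? n)%nat then h else 0).
Proof.
  intros Hj. induction n as [|n IHn]; cbn [psum].
  - destruct (Nat.leb_spec j 0); [lia|ring].
  - rewrite IHn. unfold bump.
    destruct (Nat.leb_spec j n), (Nat.leb_spec j (S n)), (Nat.eqb_spec (S n) j); try lia; ring.
Qed.

Lemma psum_transfer (x : nat -> R) (j : nat) (h : R) (n : nat) : (1 <= j)%nat ->
  psum (transfer x j h) n = psum x n + (if (n =? j)%nat then h else 0).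
Proof.
  intros Hj. induction n as [|n IHn]; cbn [psum].
  - destruct (Nat.eqb_spec 0 j); [lia|ring].
  - rewrite IHn. unfold transfer.
    destruct (Nat.eqb_spec n j), (Nat.eqb_spec (S n) j), (Nat.eqb_spec (S n) (S j)); try lia; ring.
Qed.

Lemma supported_bump (x : nat -> R) (N j : nat) (h : R) :
  supported N x -> (j <= N)%nat -> supported N (bump x j h).
Proof.
  intros Hx Hj k Hk. unfold bump. rewrite Hx by lia.
  destruct (Nat.eqb_spec k j); [lia|ring].
Qed.

Lemma supported_transfer (x : nat -> R) (N j : nat) (h : R) :
  supported N x -> (S j <= N)%nat -> supported N (transfer x j h).
Proof.
  intros Hx Hj k Hk. unfold transfer. rewrite Hx by lia.
  destruct (Nat.eqb_spec k j), (Nat.eqb_spec k (S j)); try lia; ring.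
Qed.

Lemma log2_1 : log2 1 = 0.
Proof. unfold log2. rewrite ln_1. unfold Rdiv. ring. Qed.

Lemma ln2_pos : 0 < ln 2.
Proof. rewrite <- ln_1. apply ln_increasing; lra. Qed.

Definition ell (gamma t : R) : R := log2 (1 + gamma * t).

Definition marginal (gamma t : R) : R := / (1 + gamma * t).

Lemma marginal_0 (gamma : R) : marginal gamma 0 = 1.
Proof. unfold marginal. rewrite Rmult_0_r, Rplus_0_r. apply Rinv_1. Qed.

Lemma marginal_le (gamma s t : R) :
  0 < gamma -> 0 <= s <= t -> marginal gamma t <= marginal gamma s.
Proof.
  intros Hg Hst. unfold marginal.
  assert (0 <= gamma * s) by (apply Rmult_le_pos; lra).
  apply Rinv_le_contravar; [lra|]. apply Rplus_le_compat_l, Rmult_le_compat_l; lra.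
Qed.

Lemma marginal_lt (gamma s t : R) :
  0 < gamma -> 0 <= s < t -> marginal gamma t < marginal gamma s.
Proof.
  intros Hg Hst. unfold marginal.
  assert (0 <= gamma * s) by (apply Rmult_le_pos; lra).
  assert (gamma * s < gamma * t) by (apply Rmult_lt_compat_l; lra).
  apply Rinv_lt_contravar; [apply Rmult_lt_0_compat|]; lra.
Qed.

Section Objective.

Variables (p gamma B : R) (w : nat).
Hypothesis p_range : 0 < p < 1.

Definition coord_term (x : nat -> R) (n : nat) : R :=
  p * (1 - p) ^ (n + w) * (1 / 2) * log2 (1 + gamma * x (S n)).

Definition rest_term (x : nat -> R) (n : nat) : R :=
  p ^ 2 * (1 - p) ^ (n + w) * (INR w / 2) * log2 (1 + gamma * ((B - psum x (S n)) / INR w)).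

Definition transfer_gain (a b u h : R) : R :=
  ell gamma (a + h) - ell gamma a + (1 - p) * (ell gamma (b - h) - ell gamma b)
  + p * INR w * (ell gamma ((u - h) / INR w) - ell gamma (u / INR w)).

Definition last_gain (a u h : R) : R :=
  ell gamma (a + h) - ell gamma a + INR w * (ell gamma ((u - h) / INR w) - ell gamma (u / INR w)).

Local Notation T := (T_inf p gamma B w).

Let discount_lt_1 : Rabs (1 - p) < 1.
Proof. rewrite Rabs_pos_eq; lra. Qed.

Lemma ex_series_coord_term (x : nat -> R) (N : nat) : supported N x -> ex_series (coord_term x).
Proof.
  intros Hx. apply (ex_series_eventually_geom _ N 0 (1 - p) discount_lt_1).
  intros n Hn. unfold coord_term. rewrite Hx by lia.
  rewrite Rmult_0_r, Rplus_0_r, log2_1. ring.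
Qed.

Lemma ex_series_rest_term (x : nat -> R) (N : nat) : supported N x -> ex_series (rest_term x).
Proof.
  intros Hx.
  apply (ex_series_eventually_geom _ N
    (p ^ 2 * (1 - p) ^ w * (INR w / 2) * log2 (1 + gamma * ((B - psum x N) / INR w)))
    (1 - p) discount_lt_1).
  intros n Hn. unfold rest_term. rewrite (psum_supported x N (S n) Hx) by lia.
  rewrite pow_add. ring.
Qed.

Lemma T_inf_sub (x y : nat -> R) (N : nat) : supported N x -> supported N y ->
  T y - T x = Series (fun n => coord_term y n - coord_term x n)
              + Series (fun n => rest_term y n - rest_term x n).
Proof.
  intros Hx Hy.
  rewrite !Series_minus by (eapply ex_series_coord_term || eapply ex_series_rest_term; eassumption).
  unfold T_inf, coord_term, rest_term. ring.
Qed.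

Lemma T_inf_transfer (x : nat -> R) (N m : nat) (h : R) :
  supported N x -> (S (S m) <= N)%nat ->
  T (transfer x (S m) h) - T x
  = p * (1 - p) ^ (m + w) / 2 * transfer_gain (x (S m)) (x (S (S m))) (B - psum x (S m)) h.
Proof.
  intros Hx HN.
  set (dA := p * (1 - p) ^ (m + w) * (1 / 2) * (ell gamma (x (S m) + h) - ell gamma (x (S m)))).
  set (dB := p * ((1 - p) * (1 - p) ^ (m + w)) * (1 / 2)
             * (ell gamma (x (S (S m)) - h) - ell gamma (x (S (S m))))).
  set (dC := p ^ 2 * (1 - p) ^ (m + w) * (INR w / 2)
             * (ell gamma ((B - psum x (S m) - h) / INR w) - ell gamma ((B - psum x (S m)) / INR w))).
  assert (Hpoints : is_series (fun n => (if (n =? m)%nat then dA else 0)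
                                      + (if (n =? S m)%nat then dB else 0)) (dA + dB))
    by exact (is_series_plus _ _ _ _ (is_series_point m dA) (is_series_point (S m) dB)).
  assert (Hcoord : is_series (fun n => coord_term (transfer x (S m) h) n - coord_term x n)
                             (dA + dB)).
  { eapply is_series_ext; [|exact Hpoints].
    intros n. unfold coord_term, transfer, dA, dB, ell. simpl.
    destruct (Nat.eqb_spec n m), (Nat.eqb_spec n (S m)); try lia; subst;
      rewrite ?Rplus_0_r, ?Rminus_0_r; simpl; ring. }
  assert (Hrest : forall n, (if (n =? m)%nat then dC else 0)
                            = rest_term (transfer x (S m) h) n - rest_term x n).
  { intros n. unfold rest_term, dC, ell. rewrite psum_transfer by lia. cbn [Nat.eqb].
    destruct (Nat.eqb_spec n m) as [->|Hm].
    - replace (B - (psum x (S m) + h)) with (B - psum x (S m) - h) by ring. ring.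
    - rewrite Rplus_0_r. ring. }
  rewrite (T_inf_sub x _ N Hx) by (apply supported_transfer; [exact Hx | lia]).
  rewrite (is_series_unique _ _ Hcoord).
  rewrite (is_series_unique _ _ (is_series_ext _ _ _ Hrest (is_series_point m dC))).
  unfold dA, dB, dC, transfer_gain. field.
Qed.

Lemma T_inf_bump_last (x : nat -> R) (m : nat) (h : R) : supported (S m) x ->
  T (bump x (S m) h) - T x
  = p * (1 - p) ^ (m + w) / 2 * last_gain (x (S m)) (B - psum x (S m)) h.
Proof.
  (* Every later partial sum moves by h: the second series changes by a
     geometric tail, whose sum 1/p absorbs one factor p. *)
  intros Hx.
  set (dA := p * (1 - p) ^ (m + w) * (1 / 2) * (ell gamma (x (S m) + h) - ell gamma (x (S m)))).
  set (c := p ^ 2 * (1 - p) ^ w * (INR w / 2)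
            * (ell gamma ((B - psum x (S m) - h) / INR w) - ell gamma ((B - psum x (S m)) / INR w))).
  assert (Hcoord : forall n, (if (n =? m)%nat then dA else 0)
                             = coord_term (bump x (S m) h) n - coord_term x n).
  { intros n. unfold coord_term, bump, dA, ell. cbn [Nat.eqb].
    destruct (Nat.eqb_spec n m) as [->|Hm]; rewrite ?Rplus_0_r; ring. }
  assert (Hrest : forall n, (if (m <=? n)%nat then c * (1 - p) ^ n else 0)
                            = rest_term (bump x (S m) h) n - rest_term x n).
  { intros n. unfold rest_term, c, ell. rewrite psum_bump by lia. cbn [Nat.leb].
    destruct (Nat.leb_spec m n) as [Hmn|Hmn].
    - rewrite (psum_supported x (S m) (S n) Hx) by lia.
      replace (B - (psum x (S m) + h)) with (B - psum x (S m) - h) by ring.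
      rewrite pow_add. field.
    - rewrite Rplus_0_r. ring. }
  rewrite (T_inf_sub x _ (S m) Hx) by (apply supported_bump; [exact Hx | lia]).
  rewrite (is_series_unique _ _ (is_series_ext _ _ _ Hcoord (is_series_point m dA))).
  rewrite (is_series_unique _ _
             (is_series_ext _ _ _ Hrest (is_series_geom_from m c _ discount_lt_1))).
  unfold dA, c, last_gain. rewrite pow_add. field. lra.
Qed.

End Objective.

Section Gains.

Variables (p gamma : R) (w : nat).
Hypothesis gamma_pos : 0 < gamma.
Hypothesis w_pos : (1 <= w)%nat.

Local Notation transfer_gain := (transfer_gain p gamma w).
Local Notation last_gain := (last_gain gamma w).

Lemma transfer_gain_0 (a b u : R) : transfer_gain a b u 0 = 0.
Proof. unfold transfer_gain. rewrite Rplus_0_r, !Rminus_0_r. ring. Qed.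

Lemma last_gain_0 (a u : R) : last_gain a u 0 = 0.
Proof. unfold last_gain. rewrite Rplus_0_r, Rminus_0_r. ring. Qed.

Lemma is_derive_transfer_gain (a b u : R) : 0 <= a -> 0 <= b -> 0 <= u ->
  is_derive (transfer_gain a b u) 0
    (gamma / ln 2 * (marginal gamma a - (1 - p) * marginal gamma b - p * marginal gamma (u / INR w))).
Proof.
  intros Ha Hb Hu. pose proof ln2_pos. assert (0 < INR w) by (apply lt_0_INR; lia).
  assert (0 <= u / INR w) by (apply Rdiv_le_0_compat; lra).
  unfold transfer_gain, ell, log2, marginal.
  auto_derive; rewrite ?Rmult_0_r, ?Rplus_0_r, ?Rminus_0_r.
  - repeat split; nra.
  - field. repeat split; nra.
Qed.

Lemma is_derive_last_gain (a u : R) : 0 <= a -> 0 <= u ->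
  is_derive (last_gain a u) 0 (gamma / ln 2 * (marginal gamma a - marginal gamma (u / INR w))).
Proof.
  intros Ha Hu. pose proof ln2_pos. assert (0 < INR w) by (apply lt_0_INR; lia).
  assert (0 <= u / INR w) by (apply Rdiv_le_0_compat; lra).
  unfold last_gain, ell, log2, marginal.
  auto_derive; rewrite ?Rmult_0_r, ?Rplus_0_r, ?Rminus_0_r.
  - repeat split; nra.
  - field. repeat split; nra.
Qed.

End Gains.

Section Maximizer.

Variables (p gamma B : R) (w N : nat) (x : nat -> R).
Hypothesis p_range : 0 < p < 1.
Hypothesis gamma_pos : 0 < gamma.
Hypothesis w_pos : (1 <= w)%nat.
Hypothesis x_feasible : feasible B N x.
Hypothesis x_max : forall y, feasible B N y -> T_inf p gamma B w y <= T_inf p gamma B w x.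

Local Notation coord_marg j := (marginal gamma (x j)).
Local Notation rest_marg k := (marginal gamma ((B - psum x k) / INR w)).

Let INR_w_pos : 0 < INR w.
Proof. apply lt_0_INR. lia. Qed.

Let x_nonneg j : (1 <= j <= N)%nat -> 0 <= x j.
Proof. apply x_feasible. Qed.

Let x_supported : supported N x.
Proof. apply x_feasible. Qed.

Lemma psum_x_mono (j k : nat) : (j <= k <= N)%nat -> psum x j <= psum x k.
Proof. intros Hjk. apply psum_le_psum; [intros i Hi; apply x_nonneg | ]; lia. Qed.

Lemma psum_x_le_budget (k : nat) : (k <= N)%nat -> psum x k <= B.
Proof.
  intros Hk. pose proof (psum_x_mono k N ltac:(lia)). destruct x_feasible as [[_ HB] _]. lra.
Qed.

Lemma transfer_feasible (m : nat) (h : R) : (S (S m) <= N)%nat ->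
  - x (S m) <= h <= x (S (S m)) -> feasible B N (transfer x (S m) h).
Proof.
  intros HN Hh. split; [split|apply supported_transfer; [exact x_supported|lia]].
  - intros k Hk. unfold transfer. pose proof (x_nonneg k Hk).
    destruct (Nat.eqb_spec k (S m)), (Nat.eqb_spec k (S (S m))); subst; try lia; lra.
  - rewrite psum_transfer by lia. destruct (Nat.eqb_spec N (S m)); [lia|].
    rewrite Rplus_0_r. apply psum_x_le_budget. lia.
Qed.

Lemma bump_last_feasible (h : R) : (1 <= N)%nat ->
  - x N <= h <= B - psum x N -> feasible B N (bump x N h).
Proof.
  intros HN Hh. split; [split|apply supported_bump; [exact x_supported|lia]].
  - intros k Hk. unfold bump. pose proof (x_nonneg k Hk).
    destruct (Nat.eqb_spec k N); subst; lra.
  - rewrite psum_bump, Nat.leb_refl by lia. lra.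
Qed.

Lemma transfer_gain_nonpos (m : nat) (h : R) : (S (S m) <= N)%nat ->
  - x (S m) <= h <= x (S (S m)) ->
  transfer_gain p gamma w (x (S m)) (x (S (S m))) (B - psum x (S m)) h <= 0.
Proof.
  intros HN Hh.
  pose proof (x_max _ (transfer_feasible m h HN Hh)) as Hle.
  pose proof (T_inf_transfer p gamma B w p_range x N m h x_supported HN) as Hdiff.
  pose proof (pow_lt (1 - p) (m + w) ltac:(lra)).
  assert (0 < p * (1 - p) ^ (m + w) / 2) by (apply Rdiv_lt_0_compat; nra).
  nra.
Qed.

Lemma last_gain_nonpos (m : nat) (h : R) : N = S m ->
  - x N <= h <= B - psum x N -> last_gain gamma w (x N) (B - psum x N) h <= 0.
Proof.
  intros HN Hh.
  pose proof (x_max _ (bump_last_feasible h ltac:(lia) Hh)) as Hle.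
  assert (Hsupp : supported (S m) x) by (rewrite <- HN; exact x_supported).
  pose proof (T_inf_bump_last p gamma B w p_range x m h Hsupp) as Hdiff.
  rewrite <- HN in Hdiff.
  pose proof (pow_lt (1 - p) (m + w) ltac:(lra)).
  assert (0 < p * (1 - p) ^ (m + w) / 2) by (apply Rdiv_lt_0_compat; nra).
  nra.
Qed.

Lemma transfer_optimality (m : nat) : (S (S m) <= N)%nat ->
  (0 < x (S (S m)) -> coord_marg (S m) <= (1 - p) * coord_marg (S (S m)) + p * rest_marg (S m)) /\
  (0 < x (S m) -> (1 - p) * coord_marg (S (S m)) + p * rest_marg (S m) <= coord_marg (S m)).
Proof.
  intros HN.
  assert (Hu : 0 <= B - psum x (S m)) by (pose proof (psum_x_le_budget (S m) ltac:(lia)); lra).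
  assert (Ha : 0 <= x (S m)) by (apply x_nonneg; lia).
  assert (Hb : 0 <= x (S (S m))) by (apply x_nonneg; lia).
  pose proof (is_derive_transfer_gain p gamma w gamma_pos w_pos _ _ _ Ha Hb Hu) as Hd.
  assert (Hmax : forall h, - x (S m) <= h <= x (S (S m)) ->
            transfer_gain p gamma w (x (S m)) (x (S (S m))) (B - psum x (S m)) h
            <= transfer_gain p gamma w (x (S m)) (x (S (S m))) (B - psum x (S m)) 0).
  { intros h Hh. rewrite transfer_gain_0. exact (transfer_gain_nonpos m h HN Hh). }
  assert (Hc : 0 < gamma / ln 2) by (pose proof ln2_pos; apply Rdiv_lt_0_compat; lra).
  split; intros Hpos.
  - pose proof (derive_nonpos_of_right_max _ _ _ Hd Hpos (fun h Hh => Hmax h ltac:(lra))).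
    apply (Rmult_le_reg_l _ _ _ Hc). lra.
  - pose proof (derive_nonneg_of_left_max _ _ _ Hd Hpos (fun h Hh => Hmax h ltac:(lra))).
    apply (Rmult_le_reg_l _ _ _ Hc). lra.
Qed.

Lemma last_optimality (m : nat) : N = S m ->
  (0 < x N -> rest_marg N <= coord_marg N) /\ (psum x N < B -> coord_marg N <= rest_marg N).
Proof.
  intros HN.
  assert (Hu : 0 <= B - psum x N) by (pose proof (psum_x_le_budget N ltac:(lia)); lra).
  assert (Ha : 0 <= x N) by (apply x_nonneg; lia).
  pose proof (is_derive_last_gain gamma w gamma_pos w_pos _ _ Ha Hu) as Hd.
  assert (Hmax : forall h, - x N <= h <= B - psum x N ->
            last_gain gamma w (x N) (B - psum x N) h <= last_gain gamma w (x N) (B - psum x N) 0).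
  { intros h Hh. rewrite last_gain_0. exact (last_gain_nonpos m h HN Hh). }
  assert (Hc : 0 < gamma / ln 2) by (pose proof ln2_pos; apply Rdiv_lt_0_compat; lra).
  split; intros Hpos.
  - pose proof (derive_nonneg_of_left_max _ _ _ Hd Hpos (fun h Hh => Hmax h ltac:(lra))).
    apply (Rmult_le_reg_l _ _ _ Hc). lra.
  - assert (Hslack : 0 < B - psum x N) by lra.
    pose proof (derive_nonpos_of_right_max _ _ _ Hd Hslack (fun h Hh => Hmax h ltac:(lra))).
    apply (Rmult_le_reg_l _ _ _ Hc). lra.
Qed.

Lemma rest_marg_le (j k : nat) : (j <= k <= N)%nat -> rest_marg j <= rest_marg k.
Proof.
  intros Hjk. pose proof (psum_x_mono j k Hjk). pose proof (psum_x_le_budget k ltac:(lia)).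
  apply marginal_le; [exact gamma_pos|]. split.
  - apply Rdiv_le_0_compat; lra.
  - apply Rmult_le_compat_r; [apply Rlt_le, Rinv_0_lt_compat|]; lra.
Qed.

Lemma rest_marg_lt (j k : nat) : (k <= N)%nat -> psum x j < psum x k -> rest_marg j < rest_marg k.
Proof.
  intros Hk Hjk. pose proof (psum_x_le_budget k Hk).
  apply marginal_lt; [exact gamma_pos|]. split.
  - apply Rdiv_le_0_compat; lra.
  - apply Rmult_lt_compat_r; [apply Rinv_0_lt_compat|]; lra.
Qed.

Lemma rest_marg_le_1 (k : nat) : (k <= N)%nat -> rest_marg k <= 1.
Proof.
  intros Hk. pose proof (psum_x_le_budget k Hk). rewrite <- (marginal_0 gamma).
  apply marginal_le; [exact gamma_pos|]. split; [lra|]. apply Rdiv_le_0_compat; lra.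
Qed.

Lemma rest_marg_lt_1 (k : nat) : psum x k < B -> rest_marg k < 1.
Proof.
  intros Hk. rewrite <- (marginal_0 gamma).
  apply marginal_lt; [exact gamma_pos|]. split; [lra|]. apply Rdiv_lt_0_compat; lra.
Qed.

Lemma coord_marg_lt_1 (j : nat) : 0 < x j -> coord_marg j < 1.
Proof. intros Hj. rewrite <- (marginal_0 gamma). apply marginal_lt; lra. Qed.

Lemma rest_marg_le_coord_marg (j : nat) : (1 <= j <= N)%nat -> rest_marg j <= coord_marg j.
Proof.
  intros Hj. apply (nat_ind_down (fun j => rest_marg j <= coord_marg j) N); [| |exact Hj].
  - destruct (Rle_lt_or_eq_dec 0 (x N)) as [Hpos|Hzero]; [apply x_nonneg; lia| |].
    + exact (proj1 (last_optimality (N - 1) ltac:(lia)) Hpos).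
    + rewrite <- Hzero, marginal_0. apply rest_marg_le_1. lia.
  - intros [|m] Hm IH; [lia|].
    destruct (Rle_lt_or_eq_dec 0 (x (S m))) as [Hpos|Hzero]; [apply x_nonneg; lia| |].
    + (* F_j >= (1-p) F_{j+1} + p R_j >= (1-p) R_{j+1} + p R_j >= R_j *)
      pose proof (proj2 (transfer_optimality m ltac:(lia)) Hpos).
      pose proof (rest_marg_le (S m) (S (S m)) ltac:(lia)). nra.
    + rewrite <- Hzero, marginal_0. apply rest_marg_le_1. lia.
Qed.

Lemma coord_decreasing (m : nat) : (S (S m) <= N)%nat -> 0 < x (S (S m)) -> x (S (S m)) < x (S m).
Proof.
  intros HN Hpos. apply Rnot_le_lt. intros Hle.
  assert (Hcoord : coord_marg (S (S m)) <= coord_marg (S m))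
    by (apply marginal_le; [exact gamma_pos | split; [apply x_nonneg; lia | exact Hle]]).
  assert (Hrest : rest_marg (S m) < coord_marg (S (S m))).
  { apply (Rlt_le_trans _ (rest_marg (S (S m)))).
    - apply rest_marg_lt; [exact HN|]. cbn [psum]. lra.
    - apply rest_marg_le_coord_marg. lia. }
  pose proof (proj1 (transfer_optimality m HN) Hpos). nra.
Qed.

Lemma budget_exhausted_pos (j : nat) : 0 < B -> (1 <= j <= N)%nat -> psum x j = B -> 0 < x j.
Proof.
  intros HB. induction j as [|j IHj]; intros Hj Hsum; [lia|].
  destruct (Rle_lt_or_eq_dec 0 (x (S j))) as [Hpos|Hzero]; [apply x_nonneg; lia|exact Hpos|].
  exfalso. destruct j as [|m]; [cbn [psum] in Hsum; lra|].
  assert (Hsum' : psum x (S m) = B) by (cbn [psum] in Hsum |- *; lra).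
  pose proof (proj2 (transfer_optimality m ltac:(lia)) (IHj ltac:(lia) Hsum')) as Hopt.
  rewrite <- Hzero, Hsum', Rminus_diag, Rdiv_0_l, !marginal_0 in Hopt.
  pose proof (coord_marg_lt_1 (S m) (IHj ltac:(lia) Hsum')). lra.
Qed.

Lemma last_coord_pos : 0 < B -> (1 <= N)%nat -> 0 < x N.
Proof.
  intros HB HN.
  destruct (Rle_lt_or_eq_dec 0 (x N)) as [Hpos|Hzero]; [apply x_nonneg; lia|exact Hpos|].
  destruct (Rle_lt_or_eq_dec (psum x N) B) as [Hslack|Htight]; [apply psum_x_le_budget; lia| |].
  - pose proof (proj2 (last_optimality (N - 1) ltac:(lia)) Hslack).
    pose proof (rest_marg_lt_1 N Hslack). rewrite <- Hzero, marginal_0 in *. lra.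
  - apply budget_exhausted_pos; [exact HB|lia|exact Htight].
Qed.

Lemma coords_pos (j : nat) : 0 < B -> (1 <= j <= N)%nat -> 0 < x j.
Proof.
  intros HB Hj. apply (nat_ind_down (fun j => 0 < x j) N); [| |exact Hj].
  - apply last_coord_pos; [exact HB|lia].
  - intros [|m] Hm IH; [lia|]. pose proof (coord_decreasing m ltac:(lia) IH). lra.
Qed.

End Maximizer.

Lemma T_inf_ext (p gamma B : R) (w : nat) (x y : nat -> R) :
  (forall k, (1 <= k)%nat -> x k = y k) -> T_inf p gamma B w x = T_inf p gamma B w y.
Proof.
  intros Hxy. unfold T_inf. f_equal; [f_equal|]; apply Series_ext; intros n.
  - rewrite Hxy by lia. reflexivity.
  - rewrite (psum_ext x y) by (intros k Hk; apply Hxy; lia). reflexivity.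
Qed.

Lemma padN_in (N : nat) (xi : nat -> R) (k : nat) : (1 <= k <= N)%nat -> padN N xi k = xi k.
Proof.
  intros Hk. unfold padN. destruct (Nat.leb_spec 1 k), (Nat.leb_spec k N); try lia. reflexivity.
Qed.

Lemma padN_supported (N : nat) (xi : nat -> R) : supported N (padN N xi).
Proof.
  intros k Hk. unfold padN. destruct (Nat.leb_spec k N); [lia|]. now rewrite Bool.andb_false_r.
Qed.

Lemma padN_feasible (B : R) (N : nat) (xi : nat -> R) :
  admissibleN B N xi -> feasible B N (padN N xi).
Proof.
  intros [Hnonneg Hbudget]. split; [split|apply padN_supported].
  - intros k Hk. rewrite padN_in by exact Hk. now apply Hnonneg.
  - rewrite (psum_ext _ xi) by (intros k Hk; now apply padN_in). exact Hbudget.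
Qed.

Lemma T_N_supported (p gamma B : R) (w N : nat) (y : nat -> R) :
  supported N y -> T_N p gamma B w N y = T_inf p gamma B w y.
Proof.
  intros Hy. apply T_inf_ext. intros k Hk.
  destruct (Nat.le_gt_cases k N).
  - apply padN_in. lia.
  - rewrite padN_supported, Hy by exact H. reflexivity.
Qed.

Theorem lemma5 (p gamma B : R) (w N : nat) (xi : nat -> R) :
  0 < p < 1 -> 0 < gamma -> 0 < B -> (1 <= w)%nat -> (1 <= N)%nat ->
  is_maximizerN p gamma B w N xi ->
  (* xi is the unique maximizer (on the coordinates 1..N) *)
  (forall eta, is_maximizerN p gamma B w N eta ->
     forall j, (1 <= j <= N)%nat -> eta j = xi j) ->
  (forall j, (1 <= j <= N)%nat -> 0 < xi j) /\
  (forall j, (1 <= j < N)%nat -> xi (S j) < xi j).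
Proof.
  intros Hp Hgamma HB Hw HN [Hadm Hmax] _.
  set (x := padN N xi).
  assert (Hx_max : forall y, feasible B N y -> T_inf p gamma B w y <= T_inf p gamma B w x).
  { intros y [Hy Hsupp]. rewrite <- (T_N_supported p gamma B w N y Hsupp). exact (Hmax y Hy). }
  pose proof (padN_feasible B N xi Hadm) as Hx_feasible.
  pose proof (fun j => coords_pos p gamma B w N x Hp Hgamma Hw Hx_feasible Hx_max j HB) as Hpos.
  split.
  - intros j Hj. rewrite <- (padN_in N xi j Hj). exact (Hpos j Hj).
  - intros [|m] Hm; [lia|]. rewrite <- !(padN_in N xi) by lia.
    apply (coord_decreasing p gamma B w N x Hp Hgamma Hw Hx_feasible Hx_max);
      [lia | apply Hpos; lia].
Qed.
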